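(* For any graphs $G$ and $H$, $A_1(G\,\square\, H)\cong A_1(G)\times A_1(H)$, where $G\,\square\,H$ is the Cartesian product graph.
   Context: All graphs are connected, simple and locally finite. The Cartesian product $G\,\square\,H$ has vertex set $V(G)\times V(H)$, with $(g,h)\sim(g',h')$ iff ($g=g'$ and $h\sim h'$) or ($h=h'$ and $g\sim g'$). $A_1$ is the discrete fundamental group: for base vertex $v_0$, elements are classes of graph maps $f:\mathbb{Z}\to G$ ($\mathbb{Z}$ the path graph on the integers) with $f(i)=v_0$ for $|i|\ge r_f$ ($r_f$ minimal), modulo based homotopy (a graph map $h:\mathbb{Z}\,\square\, I_m\to G$, $I_m$ the path on $\{0,\dots,m\}$, with $h(\cdot,0)=f$, $h(\cdot,m)=g$, each $h(\cdot,j)$ based); product by concatenation $p(i)=f(i+r_f)$ for $i\le0$, $p(i)=g(i-r_g)$ for $i\ge0$. *)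

From Stdlib Require Import ZArith List Relations ClassicalEpsilon.
Open Scope Z_scope.

Record graph := Graph {
  V :> Type;
  adj : V -> V -> Prop;
  adj_sym : forall x y, adj x y -> adj y x;
  adj_irrefl : forall x, ~ adj x x }.

Definition locally_finite (G : graph) : Prop :=
  forall v : G, exists l : list G, forall w, adj G v w -> In w l.

Definition connected (G : graph) : Prop :=
  forall v w : G, clos_refl_trans G (adj G) v w.

(** "equal or adjacent": the condition defining graph maps *)
Definition eqadj (G : graph) (x y : G) : Prop := x = y \/ adj G x y.

Definition box_adj (G H : graph) (x y : G * H) : Prop :=
  (fst x = fst y /\ adj H (snd x) (snd y)) \/
  (snd x = snd y /\ adj G (fst x) (fst y)).

Lemma box_adj_sym G H x y : box_adj G H x y -> box_adj G H y x.
Proof.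
  unfold box_adj; intros [[e a]|[e a]]; [left|right]; split; auto;
  apply adj_sym; auto.
Qed.

Lemma box_adj_irrefl G H x : ~ box_adj G H x x.
Proof.
  unfold box_adj; intros [[_ a]|[_ a]]; eapply adj_irrefl; eauto.
Qed.

Definition box (G H : graph) : graph :=
  Graph (G * H) (box_adj G H) (@box_adj_sym G H) (@box_adj_irrefl G H).

Definition Zgraph_map (G : graph) (f : Z -> G) : Prop :=
  forall i, eqadj G (f i) (f (i + 1)).

Definition based_radius (G : graph) (v0 : G) (f : Z -> G) (r : nat) : Prop :=
  forall i, Z.of_nat r <= Z.abs i -> f i = v0.

Definition is_loop (G : graph) (v0 : G) (f : Z -> G) : Prop :=
  Zgraph_map G f /\ exists r, based_radius G v0 f r.

(** the minimal radius r_f (chosen classically; well defined for loops) *)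
Definition min_radius (G : graph) (v0 : G) (f : Z -> G) (r : nat) : Prop :=
  based_radius G v0 f r /\ forall r', based_radius G v0 f r' -> (r <= r')%nat.

Definition radius (G : graph) (v0 : G) (f : Z -> G) : nat :=
  epsilon (inhabits 0%nat) (min_radius G v0 f).

Definition concat (G : graph) (v0 : G) (f g : Z -> G) : Z -> G :=
  fun i => if i <=? 0 then f (i + Z.of_nat (radius G v0 f))
           else g (i - Z.of_nat (radius G v0 g)).

(** based homotopy: a graph map h : Z □ I_m -> G *)
Definition based_homotopic (G : graph) (v0 : G) (f g : Z -> G) : Prop :=
  exists (m : nat) (h : Z -> nat -> G),
    (forall i (j : nat), (j < m)%nat -> eqadj G (h i j) (h i (S j))) /\
    (forall i (j : nat), (j <= m)%nat -> eqadj G (h i j) (h (i + 1) j)) /\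
    (forall i, h i 0%nat = f i) /\
    (forall i, h i m = g i) /\
    (forall j : nat, (j <= m)%nat -> exists r, based_radius G v0 (fun i => h i j) r).

From Stdlib Require Import ZArith Lia Relations Wf_nat Classical ClassicalEpsilon
  FunctionalExtensionality.
Open Scope Z_scope.

(* The isomorphism A_1(G □ H) ≅ A_1(G) × A_1(H) is induced by the pair of
   projections f ↦ (fst ∘ f, snd ∘ f).

   Based homotopy is first recast as the equivalence relation generated by
   "elementary steps": two based loops that are pointwise equal or adjacent.
   Any graph homomorphism preserves loops and steps, hence homotopy; this
   gives well-definedness of the projections.  Reparametrizing a loop by a
   slow monotone map towards 0 (such as k ↦ ⌊k/2⌋) does not change its class.
   The key construction is the staircase [interleave a b], which walks
   alternately one step of a in G and one step of b in K: it is homotopic to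
   a pair of loops varying each component separately, its projections are
   reparametrizations of a and b (surjectivity), and every loop f in G □ H is
   homotopic to the staircase of its projections (injectivity).  Finally,
   concatenation does not depend on the padding radii used to glue the
   loops, so projections commute with concatenation (homomorphism). *)

Ltac zdiv := Z.to_euclidean_division_equations; lia.

Lemma eqadj_refl (G : graph) (x : G) : eqadj G x x.
Proof. left; reflexivity. Qed.

Lemma eqadj_sym (G : graph) (x y : G) : eqadj G x y -> eqadj G y x.
Proof. intros [e|a]; [left; auto | right; apply adj_sym; auto]. Qed.

Lemma graph_map_near (G : graph) (F : Z -> G) (x y : Z) :
  Zgraph_map G F -> Z.abs (x - y) <= 1 -> eqadj G (F x) (F y).
Proof.
  intros HF Hxy.
  destruct (Z.eq_dec x y) as [->|Hne]; [apply eqadj_refl|].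
  destruct (Z.eq_dec y (x + 1)) as [->|Hne']; [apply HF|].
  replace x with (y + 1) by lia. apply eqadj_sym, HF.
Qed.

Lemma based_radius_mono (G : graph) (v0 : G) (f : Z -> G) (s s' : nat) :
  based_radius G v0 f s -> (s <= s')%nat -> based_radius G v0 f s'.
Proof. intros Hs Hss' i Hi. apply Hs. lia. Qed.

(** * Homotopy as the closure of elementary steps *)

Definition loop_step (G : graph) (v0 : G) (f g : Z -> G) : Prop :=
  is_loop G v0 f /\ is_loop G v0 g /\ forall i, eqadj G (f i) (g i).

Definition loop_homotopic (G : graph) (v0 : G) : relation (Z -> G) :=
  clos_refl_trans (Z -> G) (loop_step G v0).

Lemma loop_homotopic_sym (G : graph) (v0 : G) (f g : Z -> G) :
  loop_homotopic G v0 f g -> loop_homotopic G v0 g f.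
Proof.
  induction 1 as [f g [Hf [Hg Hfg]]| |]; [|apply rt_refl|eapply rt_trans; eauto].
  apply rt_step. split; [exact Hg|]. split; [exact Hf|].
  intros i; apply eqadj_sym, Hfg.
Qed.

Lemma loop_homotopic_chain (G : graph) (v0 : G) (h : nat -> Z -> G) (n : nat) :
  (forall j, (j < n)%nat -> loop_step G v0 (h j) (h (S j))) ->
  loop_homotopic G v0 (h 0%nat) (h n).
Proof.
  induction n as [|n IH]; intros Hsteps; [apply rt_refl|].
  eapply rt_trans; [apply IH; intros j Hj; apply Hsteps; lia|].
  apply rt_step, Hsteps; lia.
Qed.

(** The columns of a based homotopy form a chain of elementary steps. *)
Lemma homotopic_loop_homotopic (G : graph) (v0 : G) (f g : Z -> G) :
  based_homotopic G v0 f g -> loop_homotopic G v0 f g.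
Proof.
  intros [m [h [Hvert [Hhor [H0 [Hm Hbased]]]]]].
  assert (Hcol : forall j, (j <= m)%nat -> is_loop G v0 (fun i => h i j)).
  { intros j Hj. split; [intros i; apply Hhor; auto | apply Hbased; auto]. }
  replace f with (fun i => h i 0%nat) by (extensionality i; apply H0).
  replace g with (fun i => h i m) by (extensionality i; apply Hm).
  apply (loop_homotopic_chain G v0 (fun j i => h i j)).
  intros j Hj. split; [apply Hcol; lia|]. split; [apply Hcol; lia|].
  intros i; apply Hvert; lia.
Qed.

Lemma loop_homotopic_homotopic (G : graph) (v0 : G) (f g : Z -> G) :
  is_loop G v0 f -> loop_homotopic G v0 f g -> based_homotopic G v0 f g.
Proof.
  intros Hf Hfg. apply clos_rt_rt1n in Hfg.
  induction Hfg as [f|f f' g [_ [Hf' Hstep]] _ IH].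
  - destruct Hf as [Hmap [r Hr]]. exists 0%nat, (fun i _ => f i).
    split; [intros; lia|]. split; [intros; apply Hmap|].
    split; [reflexivity|]. split; [reflexivity|].
    intros; exists r; exact Hr.
  - destruct (IH Hf') as [m [h [Hvert [Hhor [H0 [Hm Hbased]]]]]].
    exists (S m), (fun i j => match j with O => f i | S j' => h i j' end).
    split; [|split; [|split; [|split]]].
    + intros i [|j] Hj; [rewrite H0; apply Hstep | apply Hvert; lia].
    + intros i [|j] Hj; [apply (proj1 Hf) | apply Hhor; lia].
    + reflexivity.
    + exact Hm.
    + intros [|j] Hj; [apply (proj2 Hf) | apply Hbased; lia].
Qed.

Lemma homotopic_iff (G : graph) (v0 : G) (f g : Z -> G) :
  is_loop G v0 f -> (based_homotopic G v0 f g <-> loop_homotopic G v0 f g).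
Proof.
  intros Hf; split; [apply homotopic_loop_homotopic | apply loop_homotopic_homotopic; auto].
Qed.

Lemma loop_homotopic_map (G K : graph) (v0 : G) (w0 : K)
    (T : (Z -> G) -> (Z -> K)) :
  (forall f g, loop_step G v0 f g -> loop_step K w0 (T f) (T g)) ->
  forall f g, loop_homotopic G v0 f g -> loop_homotopic K w0 (T f) (T g).
Proof.
  intros HT f g Hfg.
  induction Hfg; [apply rt_step, HT; auto | apply rt_refl | eapply rt_trans; eauto].
Qed.

(** * Graph homomorphisms act on loops *)

Definition graph_hom (G K : graph) (p : G -> K) : Prop :=
  forall x y, eqadj G x y -> eqadj K (p x) (p y).

Section GraphHom.
Variables (G K : graph) (v0 : G) (w0 : K) (p : G -> K).
Hypotheses (Hp : graph_hom G K p) (Hbase : p v0 = w0).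

Lemma graph_hom_radius (f : Z -> G) (r : nat) :
  based_radius G v0 f r -> based_radius K w0 (fun i => p (f i)) r.
Proof. intros Hr i Hi; rewrite Hr; auto. Qed.

Lemma graph_hom_loop (f : Z -> G) :
  is_loop G v0 f -> is_loop K w0 (fun i => p (f i)).
Proof.
  intros [Hf [r Hr]]. split; [intros i; apply Hp, Hf|].
  exists r; apply graph_hom_radius, Hr.
Qed.

Lemma graph_hom_homotopic (f g : Z -> G) :
  loop_homotopic G v0 f g -> loop_homotopic K w0 (fun i => p (f i)) (fun i => p (g i)).
Proof.
  apply (loop_homotopic_map G K v0 w0 (fun f i => p (f i))).
  intros f' g' [Hf [Hg Hfg]]. split; [apply graph_hom_loop; auto|].
  split; [apply graph_hom_loop; auto|]. intros i; apply Hp, Hfg.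
Qed.

End GraphHom.

(** * Slow reparametrizations *)

Definition slow_reparam (th : Z -> Z) : Prop :=
  (forall k, 0 <= th (k + 1) - th k <= 1) /\
  (forall k, (0 <= th k <= k) \/ (k <= th k <= 0)) /\
  (forall k, Z.abs k <= 2 * Z.abs (th k) + 1).

Lemma reparam_loop (G : graph) (v0 : G) (F : Z -> G) (th : Z -> Z) :
  is_loop G v0 F ->
  (forall k, Z.abs (th (k + 1) - th k) <= 1) ->
  (forall k, Z.abs k <= 2 * Z.abs (th k) + 1) ->
  is_loop G v0 (fun k => F (th k)).
Proof.
  intros [HF [r Hr]] Hstep Hhalf. split.
  - intros k. apply graph_map_near; [exact HF|]. specialize (Hstep k). lia.
  - exists (2 * r + 1)%nat. intros k Hk. apply Hr. specialize (Hhalf k). lia.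
Qed.

(** A slow reparametrization does not change the homotopy class: clamp [th]
    into the window [k - j, k + j] and let the window grow one step at a time;
    once it exceeds twice the radius of the loop, the clamp agrees with [th]
    wherever the loop is not at its base point. *)
Lemma reparam_homotopic (G : graph) (v0 : G) (F : Z -> G) (th : Z -> Z) :
  is_loop G v0 F -> slow_reparam th -> loop_homotopic G v0 F (fun k => F (th k)).
Proof.
  intros HF [Hstep [Hbetween Hhalf]]. pose proof HF as [HFmap [r Hr]].
  set (clamp := fun (j : nat) k => Z.max (k - Z.of_nat j) (Z.min (k + Z.of_nat j) (th k))).
  assert (Hclamp : forall j, is_loop G v0 (fun k => F (clamp j k))).
  { intros j. apply reparam_loop; auto; intros k; unfold clamp.
    - specialize (Hstep k). lia.
    - specialize (Hhalf k). destruct (Hbetween k); lia. }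
  assert (Hth : is_loop G v0 (fun k => F (th k))).
  { apply reparam_loop; auto; intros k; specialize (Hstep k); lia. }
  assert (Hwindow : loop_homotopic G v0 F (fun k => F (clamp (2 * r)%nat k))).
  { pose proof (loop_homotopic_chain G v0 (fun j k => F (clamp j k)) (2 * r))
      as Hchain; cbv beta in Hchain.
    replace (fun k => F (clamp 0%nat k)) with F in Hchain
      by (extensionality k; unfold clamp; f_equal; destruct (Hbetween k); lia).
    apply Hchain. intros j _. split; [auto|]. split; [auto|].
    intros k; apply graph_map_near; auto; unfold clamp; lia. }
  eapply rt_trans; [exact Hwindow|]. apply rt_step.
  split; [auto|]. split; [auto|]. intros k.
  specialize (Hhalf k).
  destruct (Z_le_gt_dec (Z.abs k) (Z.of_nat (2 * r))).
  - replace (clamp (2 * r)%nat k) with (th k) by (unfold clamp; destruct (Hbetween k); lia).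
    apply eqadj_refl.
  - rewrite (Hr (clamp _ k)), (Hr (th k)); [apply eqadj_refl | | ];
      unfold clamp; destruct (Hbetween k); lia.
Qed.

Lemma slow_reparam_half : slow_reparam (fun k => k / 2).
Proof. split; [|split]; intros k; zdiv. Qed.

Lemma slow_reparam_half_up : slow_reparam (fun k => (k + 1) / 2).
Proof. split; [|split]; intros k; zdiv. Qed.

(** * The Cartesian product *)

Lemma box_eqadj_l (G K : graph) (x x' : G) (y : K) :
  eqadj G x x' -> eqadj (box G K) (x, y) (x', y).
Proof. intros [e|a]; [left; subst; auto | right; right; simpl; auto]. Qed.

Lemma box_eqadj_r (G K : graph) (x : G) (y y' : K) :
  eqadj K y y' -> eqadj (box G K) (x, y) (x, y').
Proof. intros [e|a]; [left; subst; auto | right; left; simpl; auto]. Qed.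

Lemma box_eqadj_proj (G K : graph) (p q : G * K) :
  eqadj (box G K) p q -> eqadj G (fst p) (fst q) /\ eqadj K (snd p) (snd q).
Proof.
  intros [e|[[e a]|[e a]]].
  - subst; split; apply eqadj_refl.
  - split; [left | right]; auto.
  - split; [right | left]; auto.
Qed.

Lemma fst_hom (G K : graph) : graph_hom (box G K) G fst.
Proof. intros p q Hpq; apply (box_eqadj_proj G K p q Hpq). Qed.

Lemma snd_hom (G K : graph) : graph_hom (box G K) K snd.
Proof. intros p q Hpq; apply (box_eqadj_proj G K p q Hpq). Qed.

Section Box.
Variables (G K : graph) (v0 : G) (w0 : K).

Lemma box_loop_proj (f : Z -> G * K) :
  is_loop (box G K) (v0, w0) f ->
  is_loop G v0 (fun i => fst (f i)) /\ is_loop K w0 (fun i => snd (f i)).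
Proof.
  intros Hf. split.
  - exact (graph_hom_loop (box G K) G (v0, w0) v0 fst (fst_hom G K) eq_refl f Hf).
  - exact (graph_hom_loop (box G K) K (v0, w0) w0 snd (snd_hom G K) eq_refl f Hf).
Qed.

(** The staircase: alternately one step of [a] in G and one step of [b] in K. *)
Definition interleave (a : Z -> G) (b : Z -> K) : Z -> G * K :=
  fun k => (a ((k + 1) / 2), b (k / 2)).

Lemma interleave_loop (a : Z -> G) (b : Z -> K) :
  is_loop G v0 a -> is_loop K w0 b -> is_loop (box G K) (v0, w0) (interleave a b).
Proof.
  intros [Ha [ra Hra]] [Hb [rb Hrb]]. split.
  - intros k. unfold interleave.
    assert (E : ((k + 1 + 1) / 2 = (k + 1) / 2 + 1 /\ (k + 1) / 2 = k / 2) \/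
                ((k + 1 + 1) / 2 = (k + 1) / 2 /\ (k + 1) / 2 = k / 2 + 1)) by zdiv.
    destruct E as [[-> ->]|[-> ->]]; [apply box_eqadj_l, Ha | apply box_eqadj_r, Hb].
  - exists (2 * (ra + rb) + 2)%nat. intros k Hk. unfold interleave.
    rewrite (Hra ((k + 1) / 2)), (Hrb (k / 2)) by zdiv. reflexivity.
Qed.

Lemma interleave_homotopic (a a' : Z -> G) (b b' : Z -> K) :
  is_loop G v0 a' -> is_loop K w0 b ->
  loop_homotopic G v0 a a' -> loop_homotopic K w0 b b' ->
  loop_homotopic (box G K) (v0, w0) (interleave a b) (interleave a' b').
Proof.
  intros Ha' Hb Haa' Hbb'. apply rt_trans with (interleave a' b).
  - apply (loop_homotopic_map G (box G K) v0 (v0, w0) (fun a => interleave a b)); auto.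
    intros x y [Hx [Hy Hxy]]. split; [apply interleave_loop; auto|].
    split; [apply interleave_loop; auto|]. intros k; apply box_eqadj_l, Hxy.
  - apply (loop_homotopic_map K (box G K) w0 (v0, w0) (fun b => interleave a' b)); auto.
    intros x y [Hx [Hy Hxy]]. split; [apply interleave_loop; auto|].
    split; [apply interleave_loop; auto|]. intros k; apply box_eqadj_r, Hxy.
Qed.

(** Every loop of G □ K is homotopic to the staircase of its projections:
    slowing it down by k ↦ ⌊k/2⌋ leaves room to advance the G-coordinate one
    step early. *)
Lemma loop_interleave_proj (f : Z -> G * K) :
  is_loop (box G K) (v0, w0) f ->
  loop_homotopic (box G K) (v0, w0) f
    (interleave (fun i => fst (f i)) (fun i => snd (f i))).
Proof.
  intros Hf. destruct (box_loop_proj f Hf) as [Hf1 Hf2].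
  eapply rt_trans; [exact (reparam_homotopic (box G K) (v0, w0) f _ Hf slow_reparam_half)|].
  apply rt_step. split.
  { apply reparam_loop; auto; intros k; zdiv. }
  split; [apply interleave_loop; auto|].
  intros k. unfold interleave; cbv beta.
  assert (E : (k + 1) / 2 = k / 2 \/ (k + 1) / 2 = k / 2 + 1) by zdiv.
  destruct (f (k / 2)) as [x y] eqn:Efk.
  destruct E as [E|E]; rewrite E; [rewrite Efk; apply eqadj_refl|].
  apply box_eqadj_l. replace x with (fst (f (k / 2))) by (rewrite Efk; reflexivity).
  apply (proj1 Hf1).
Qed.

Lemma box_homotopic_iff (f g : Z -> G * K) :
  is_loop (box G K) (v0, w0) f -> is_loop (box G K) (v0, w0) g ->
  loop_homotopic (box G K) (v0, w0) f g <->
  loop_homotopic G v0 (fun i => fst (f i)) (fun i => fst (g i)) /\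
  loop_homotopic K w0 (fun i => snd (f i)) (fun i => snd (g i)).
Proof.
  intros Hf Hg. destruct (box_loop_proj g Hg) as [Hg1 Hg2]. split.
  - intros Hfg. split.
    + exact (graph_hom_homotopic (box G K) G (v0, w0) v0 fst (fst_hom G K) eq_refl f g Hfg).
    + exact (graph_hom_homotopic (box G K) K (v0, w0) w0 snd (snd_hom G K) eq_refl f g Hfg).
  - intros [H1 H2].
    eapply rt_trans; [exact (loop_interleave_proj f Hf)|].
    eapply rt_trans; [apply interleave_homotopic; eauto; apply (box_loop_proj f Hf)|].
    apply loop_homotopic_sym, loop_interleave_proj; auto.
Qed.

Lemma interleave_fst (a : Z -> G) (b : Z -> K) :
  is_loop G v0 a -> loop_homotopic G v0 a (fun k => fst (interleave a b k)).
Proof. intros Ha. exact (reparam_homotopic _ _ a _ Ha slow_reparam_half_up). Qed.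

Lemma interleave_snd (a : Z -> G) (b : Z -> K) :
  is_loop K w0 b -> loop_homotopic K w0 b (fun k => snd (interleave a b k)).
Proof. intros Hb. exact (reparam_homotopic _ _ b _ Hb slow_reparam_half). Qed.

End Box.

(** * Concatenation *)

Definition concat_at (G : graph) (a b : Z -> G) (s t : nat) : Z -> G :=
  fun i => if i <=? 0 then a (i + Z.of_nat s) else b (i - Z.of_nat t).

Lemma concat_eq (G : graph) (v0 : G) (a b : Z -> G) :
  concat G v0 a b = concat_at G a b (radius G v0 a) (radius G v0 b).
Proof. reflexivity. Qed.

Lemma concat_at_map (G K : graph) (p : G -> K) (a b : Z -> G) (s t : nat) :
  (fun i => p (concat_at G a b s t i)) =
  concat_at K (fun i => p (a i)) (fun i => p (b i)) s t.
Proof. extensionality i. unfold concat_at. destruct (i <=? 0); reflexivity. Qed.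

Section Concat.
Variables (G : graph) (v0 : G) (a b : Z -> G).
Hypotheses (Ha : is_loop G v0 a) (Hb : is_loop G v0 b).

Lemma concat_at_loop (s t : nat) :
  based_radius G v0 a s -> based_radius G v0 b t -> is_loop G v0 (concat_at G a b s t).
Proof.
  intros Hs Ht. split.
  - intros i. unfold concat_at.
    destruct (Z.leb_spec i 0); destruct (Z.leb_spec (i + 1) 0); try lia.
    + replace (i + 1 + Z.of_nat s) with (i + Z.of_nat s + 1) by lia. apply (proj1 Ha).
    + replace i with 0 by lia. rewrite (Hs (0 + Z.of_nat s)) by lia.
      rewrite <- (Ht (- Z.of_nat t)) by lia.
      replace (0 + 1 - Z.of_nat t) with (- Z.of_nat t + 1) by lia. apply (proj1 Hb).
    + replace (i + 1 - Z.of_nat t) with (i - Z.of_nat t + 1) by lia. apply (proj1 Hb).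
  - exists (2 * (s + t))%nat. intros i Hi. unfold concat_at.
    destruct (Z.leb_spec i 0); [apply Hs | apply Ht]; lia.
Qed.

(** Enlarging the padding radii, one unit at a time, is a homotopy. *)
Lemma concat_at_pad (s t n m : nat) :
  based_radius G v0 a s -> based_radius G v0 b t ->
  loop_homotopic G v0 (concat_at G a b s t) (concat_at G a b (n + s) (m + t)).
Proof.
  intros Hs Ht.
  assert (Hloop : forall s' t', (s <= s')%nat -> (t <= t')%nat ->
                    is_loop G v0 (concat_at G a b s' t')).
  { intros; apply concat_at_loop; eapply based_radius_mono; eauto. }
  eapply rt_trans.
  - apply (loop_homotopic_chain G v0 (fun j => concat_at G a b (j + s) t) n).
    intros j _. split; [apply Hloop; lia|]. split; [apply Hloop; lia|].
    intros i. unfold concat_at. destruct (Z.leb_spec i 0); [|apply eqadj_refl].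
    replace (i + Z.of_nat (S j + s)) with (i + Z.of_nat (j + s) + 1) by lia. apply (proj1 Ha).
  - apply (loop_homotopic_chain G v0 (fun j => concat_at G a b (n + s) (j + t)) m).
    intros j _. split; [apply Hloop; lia|]. split; [apply Hloop; lia|].
    intros i. unfold concat_at. destruct (Z.leb_spec i 0); [apply eqadj_refl|].
    replace (i - Z.of_nat (j + t)) with (i - Z.of_nat (S j + t) + 1) by lia.
    apply eqadj_sym, (proj1 Hb).
Qed.

Lemma concat_at_any (s t s' t' : nat) :
  based_radius G v0 a s -> based_radius G v0 b t ->
  based_radius G v0 a s' -> based_radius G v0 b t' ->
  loop_homotopic G v0 (concat_at G a b s t) (concat_at G a b s' t').
Proof.
  intros Hs Ht Hs' Ht'. eapply rt_trans; [apply (concat_at_pad s t s' t'); auto|].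
  apply loop_homotopic_sym. rewrite (Nat.add_comm s' s), (Nat.add_comm t' t).
  apply concat_at_pad; auto.
Qed.

End Concat.

(** The chosen radius of a loop is a radius (the least one exists classically). *)
Lemma radius_spec (G : graph) (v0 : G) (f : Z -> G) :
  is_loop G v0 f -> based_radius G v0 f (radius G v0 f).
Proof.
  intros [_ Hex]. unfold radius.
  destruct (dec_inh_nat_subset_has_unique_least_element (based_radius G v0 f)
              (fun n => classic _) Hex) as [n [Hn _]].
  apply (epsilon_spec (inhabits 0%nat) (min_radius G v0 f) (ex_intro _ n Hn)).
Qed.

Lemma graph_hom_concat (G K : graph) (v0 : G) (w0 : K) (p : G -> K) (f g : Z -> G) :
  graph_hom G K p -> p v0 = w0 -> is_loop G v0 f -> is_loop G v0 g ->
  is_loop K w0 (fun i => p (concat G v0 f g i)) /\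
  loop_homotopic K w0 (fun i => p (concat G v0 f g i))
    (concat K w0 (fun i => p (f i)) (fun i => p (g i))).
Proof.
  intros Hp Hbase Hf Hg.
  pose proof (graph_hom_loop _ _ _ _ p Hp Hbase f Hf) as Hpf.
  pose proof (graph_hom_loop _ _ _ _ p Hp Hbase g Hg) as Hpg.
  pose proof (graph_hom_radius _ _ _ _ p Hbase f _ (radius_spec _ _ f Hf)) as Rf.
  pose proof (graph_hom_radius _ _ _ _ p Hbase g _ (radius_spec _ _ g Hg)) as Rg.
  rewrite !concat_eq, concat_at_map.
  split; [apply concat_at_loop; auto|].
  apply concat_at_any; auto; apply radius_spec; auto.
Qed.

Theorem lemma4p4 (G H : graph) (v0 : G) (w0 : H) :
  connected G -> locally_finite G ->
  connected H -> locally_finite H ->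
  exists Phi : (Z -> G * H) -> (Z -> G) * (Z -> H),
    (forall f, is_loop (box G H) (v0, w0) f ->
       is_loop G v0 (fst (Phi f)) /\ is_loop H w0 (snd (Phi f))) /\
    (forall f g, is_loop (box G H) (v0, w0) f -> is_loop (box G H) (v0, w0) g ->
       (based_homotopic (box G H) (v0, w0) f g <->
        (based_homotopic G v0 (fst (Phi f)) (fst (Phi g)) /\
         based_homotopic H w0 (snd (Phi f)) (snd (Phi g))))) /\
    (forall a b, is_loop G v0 a -> is_loop H w0 b ->
       exists f, is_loop (box G H) (v0, w0) f /\
         based_homotopic G v0 (fst (Phi f)) a /\
         based_homotopic H w0 (snd (Phi f)) b) /\
    (forall f g, is_loop (box G H) (v0, w0) f -> is_loop (box G H) (v0, w0) g ->
       based_homotopic G v0 (fst (Phi (concat (box G H) (v0, w0) f g)))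
         (concat G v0 (fst (Phi f)) (fst (Phi g))) /\
       based_homotopic H w0 (snd (Phi (concat (box G H) (v0, w0) f g)))
         (concat H w0 (snd (Phi f)) (snd (Phi g)))).
Proof.
  intros _ _ _ _.
  exists (fun f => (fun i => fst (f i), fun i => snd (f i))); cbn.
  split; [|split; [|split]].
  - apply box_loop_proj.
  - intros f g Hf Hg. destruct (box_loop_proj _ _ _ _ f Hf) as [Hf1 Hf2].
    rewrite !homotopic_iff by assumption. apply box_homotopic_iff; assumption.
  - intros a b Ha Hb. exists (interleave G H a b).
    pose proof (interleave_loop G H v0 w0 a b Ha Hb) as Hab.
    destruct (box_loop_proj _ _ _ _ _ Hab) as [Hab1 Hab2].
    split; [exact Hab|].
    split; apply loop_homotopic_homotopic, loop_homotopic_sym; auto.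
    + apply interleave_fst; auto.
    + apply interleave_snd; auto.
  - intros f g Hf Hg. split.
    + destruct (graph_hom_concat (box G H) G (v0, w0) v0 fst f g
                  (fst_hom G H) eq_refl Hf Hg) as [Hl Hh].
      apply loop_homotopic_homotopic; auto.
    + destruct (graph_hom_concat (box G H) H (v0, w0) w0 snd f g
                  (snd_hom G H) eq_refl Hf Hg) as [Hl Hh].
      apply loop_homotopic_homotopic; auto.
Qed.
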